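(* Consider a repeater chain in the model described in the context with $N+1$ nodes (hence $N$ edges) and elementary-link fidelity $F$ with $\tfrac14<F<1$. Let $Q^*\approx0.110028$ be the unique solution in $[0,\tfrac12]$ of $h(Q)=\tfrac12$, where $h(Q)=-Q\log_2Q-(1-Q)\log_2(1-Q)$, and let $$N^*=\frac{\log(1-2Q^* )}{\log\left(\frac{4F-1}{3}\right)}.$$ Then for every $N\ge N^*$ the secret-key rate of the chain is $\mathrm{SKR}=0$.
   Context: Repeater-chain model (swap-ASAP, synchronized attempts), with arbitrary edge lengths and memory coherence time $T$ at the repeater nodes. Edge $j$ connects nodes $j$ and $j+1$ and has length $l_j\ge0$ (km). Entanglement generation proceeds in synchronized rounds of duration $t_{\mathrm{att}}=\frac1c\max_jl_j$, $c=200{,}000$ km/s. In each round, each edge not yet successful attempts, succeeding independently with probability $p_j=10^{-\alpha l_j/10}$, $\alpha=0.2\ \mathrm{km}^{-1}$; the number of rounds $X_j$ until edge $j$ succeeds is geometric on $\{1,2,\dots\}$ with parameter $p_j$, independently across edges. Edge $j$ completes at time $t_j=t_{\mathrm{att}}X_j$, and the chain completes at $T_{\mathrm{done}}=t_{\mathrm{att}}\max_jX_j$; the entangling rate is $R=1/\mathbb E[T_{\mathrm{done}}]$. Each successful edge produces the two-qubit Werner state $W_{w_0}=w_0|\phi^+\rangle\langle\phi^+|+(1-w_0)\mathbb 1/4$ with $w_0=(4F-1)/3$. Each repeater node (every non-end node) performs entanglement swapping as soon as both of its links exist; meanwhile a stored qubit $k$ held for time $t$ in a memory with coherence time $T$ undergoes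 $\rho\mapsto e^{-t/T}\rho+(1-e^{-t/T})\frac{\mathbb 1_2}{2}\otimes\mathrm{Tr}_k\rho$; end nodes measure immediately and suffer no memory noise. Consequently, given the completion times, the end-to-end state is the Werner state with parameter $w_{e2e}=w_0^{N}\prod_{i}e^{-|t_i-t_{i-1}|/T}$, the product over repeater nodes $i$ (node $i$ sitting between edges $i-1$ and $i$); the delivered state is the Werner state with parameter $\mathbb E[w_{e2e}]$. Its quantum bit error rates are $Q_X=Q_Z=(1-\mathbb E[w_{e2e}])/2$, the secret-key fraction is $\mathrm{SKF}=\max(0,1-h(Q_X)-h(Q_Z))$, and the secret-key rate is $\mathrm{SKR}=R\cdot\mathrm{SKF}$. *)

From Stdlib Require Import Reals List Lra.
From Coquelicot Require Import Coquelicot.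
Open Scope R_scope.

Definition c_light : R := 200000.          (* km/s *)
Definition alpha_att : R := 2 / 10.         (* km^-1 *)

Definition p_edge (l : R) : R := Rpower 10 (- alpha_att * l / 10).

(** max_{j < n} l j  (lengths are >= 0, so starting at 0 is harmless) *)
Fixpoint max_len (l : nat -> R) (n : nat) : R :=
  match n with O => 0 | S k => Rmax (max_len l k) (l k) end.

Definition t_att (N : nat) (l : nat -> R) : R := / c_light * max_len l N.

(** Expectation of g (X_0, ..., X_{n-1}) where the X_j are independent
    geometric variables on {1,2,...} with parameters ps_j:
    P(X_j = k+1) = p_j (1-p_j)^k.  Iterated expectation (series). *)
Fixpoint E_geo (ps : list R) (g : list nat -> R) : R :=
  match ps with
  | nil => g nil
  | p :: ps' =>
      Series (fun k => p * (1 - p) ^ k * E_geo ps' (fun xs => g (S k :: xs)))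
  end.

Definition edge_probs (N : nat) (l : nat -> R) : list R :=
  map (fun j => p_edge (l j)) (seq 0 N).

Fixpoint prodR (f : nat -> R) (n : nat) : R :=
  match n with O => 1 | S k => prodR f k * f k end.

Definition w0_of (F : R) : R := (4 * F - 1) / 3.

(** end-to-end Werner parameter given X = (X_0,...,X_{N-1}):
    w0^N * prod_{repeater nodes i = 1..N-1} exp(-|t_i - t_{i-1}|/T),
    with t_j = t_att * X_j *)
Definition w_e2e (N : nat) (l : nat -> R) (T F : R) (X : list nat) : R :=
  w0_of F ^ N *
  prodR (fun i => exp (- Rabs (t_att N l * INR (nth (S i) X 0%nat)
                              - t_att N l * INR (nth i X 0%nat)) / T))
        (N - 1).

Definition T_done (N : nat) (l : nat -> R) (X : list nat) : R :=
  t_att N l * INR (fold_right Nat.max 0%nat X).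

Definition rate (N : nat) (l : nat -> R) : R :=
  / E_geo (edge_probs N l) (T_done N l).

Definition Ew_e2e (N : nat) (l : nat -> R) (T F : R) : R :=
  E_geo (edge_probs N l) (w_e2e N l T F).

Definition log2 (x : R) : R := ln x / ln 2.
Definition h2 (Q : R) : R := - Q * log2 Q - (1 - Q) * log2 (1 - Q).

(** QBER Q_X = Q_Z = (1 - E[w_e2e]) / 2 *)
Definition QBER (N : nat) (l : nat -> R) (T F : R) : R :=
  (1 - Ew_e2e N l T F) / 2.

Definition SKF (N : nat) (l : nat -> R) (T F : R) : R :=
  Rmax 0 (1 - h2 (QBER N l T F) - h2 (QBER N l T F)).

Definition SKR (N : nat) (l : nat -> R) (T F : R) : R :=
  rate N l * SKF N l T F.

(** The end-to-end Werner parameter is [w0^N] times a product of memory-decoherence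
    factors [exp (- |dt| / T)] in [(0,1]], so its expectation (a mixture over the
    geometric waiting times) is at most [w0^N].  The hypothesis on [N] says exactly
    [w0^N <= 1 - 2 Q*], hence the QBER [Q = (1 - E[w_e2e]) / 2] lies in [[Q*, 1/2]].
    The binary entropy increases on [(0, 1/2]], so [h Q >= h Q* = 1/2] and the
    secret-key fraction [max 0 (1 - 2 h Q)] vanishes. *)

From Stdlib Require Import Reals Lra Lia List.
From Coquelicot Require Import Coquelicot.
Open Scope R_scope.

Lemma Series_0 : Series (fun _ => 0) = 0.
Proof.
  rewrite <- (Series_ext (fun _ => 0 * 1)) by (intros; ring).
  rewrite Series_scal_l; ring.
Qed.

Lemma is_series_geom_pmf (p : R) :
  0 < p <= 1 -> is_series (fun k => p * (1 - p) ^ k) 1.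
Proof.
  intros Hp.
  assert (Hq : Rabs (1 - p) < 1) by (rewrite Rabs_pos_eq; lra).
  pose proof (is_series_scal_l p _ _ (is_series_geom (1 - p) Hq)) as Hgeom.
  unfold scal in Hgeom; simpl in Hgeom; unfold mult in Hgeom; simpl in Hgeom.
  replace (p * / (1 - (1 - p))) with 1 in Hgeom by (field; lra).
  exact Hgeom.
Qed.

Lemma Series_geom_mixture_bound (p b : R) (u : nat -> R) :
  0 < p <= 1 -> (forall k, 0 <= u k <= b) ->
  0 <= Series (fun k => p * (1 - p) ^ k * u k) <= b.
Proof.
  intros Hp Hu.
  pose proof (is_series_scal_l b _ _ (is_series_geom_pmf p Hp)) as Hdom.
  unfold scal in Hdom; simpl in Hdom; unfold mult in Hdom; simpl in Hdom.
  rewrite Rmult_1_r in Hdom.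
  assert (Hterm : forall k, 0 <= p * (1 - p) ^ k * u k <= b * (p * (1 - p) ^ k)).
  { intro k. destruct (Hu k).
    assert (0 <= p * (1 - p) ^ k) by (apply Rmult_le_pos; [lra | apply pow_le; lra]).
    split; [apply Rmult_le_pos; lra | nra]. }
  split.
  - rewrite <- Series_0. apply Series_le.
    + intro k. destruct (Hterm k); lra.
    + apply (@ex_series_le R_AbsRing R_CompleteNormedModule)
        with (b := fun k => b * (p * (1 - p) ^ k)).
      * intro k. rewrite Rabs_pos_eq; destruct (Hterm k); lra.
      * eexists; exact Hdom.
  - rewrite <- (is_series_unique _ _ Hdom). apply Series_le; [exact Hterm | eexists; exact Hdom].
Qed.

Lemma E_geo_bound (ps : list R) (g : list nat -> R) (b : R) :
  (forall p, In p ps -> 0 < p <= 1) -> (forall xs, 0 <= g xs <= b) ->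
  0 <= E_geo ps g <= b.
Proof.
  revert g; induction ps as [|p ps IH]; intros g Hps Hg; simpl.
  - apply Hg.
  - apply Series_geom_mixture_bound; [apply Hps; left; reflexivity |].
    intro k. apply IH; [intros q Hq; apply Hps; right; exact Hq | intro xs; apply Hg].
Qed.

Lemma prodR_bound (f : nat -> R) (n : nat) :
  (forall i, 0 <= f i <= 1) -> 0 <= prodR f n <= 1.
Proof.
  intros Hf; induction n as [|n IH]; simpl; [lra |].
  destruct (Hf n), IH; split; [apply Rmult_le_pos | rewrite <- (Rmult_1_r 1); apply Rmult_le_compat]; lra.
Qed.

Lemma exp_neg_abs_div_bound (x T : R) : 0 < T -> 0 <= exp (- Rabs x / T) <= 1.
Proof.
  intros HT. split; [apply Rlt_le, exp_pos |].
  assert (Hneg : - Rabs x / T <= 0).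
  { unfold Rdiv. pose proof (Rabs_pos x). pose proof (Rinv_0_lt_compat T HT). nra. }
  destruct (Rle_lt_or_eq_dec _ _ Hneg) as [Hlt | ->]; [| rewrite exp_0; lra].
  rewrite <- exp_0. left; apply exp_increasing, Hlt.
Qed.

Lemma p_edge_bound (l : R) : 0 <= l -> 0 < p_edge l <= 1.
Proof.
  intros Hl. unfold p_edge, alpha_att. split; [apply exp_pos |].
  rewrite <- (Rpower_O 10) by lra. apply Rle_Rpower; lra.
Qed.

Lemma edge_probs_bound (N : nat) (l : nat -> R) :
  (forall j, (j < N)%nat -> 0 <= l j) -> forall p, In p (edge_probs N l) -> 0 < p <= 1.
Proof.
  intros Hl p Hp. apply in_map_iff in Hp as [j [<- Hj]].
  apply in_seq in Hj. apply p_edge_bound, Hl. lia.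
Qed.

Lemma w_e2e_bound (N : nat) (l : nat -> R) (T F : R) (X : list nat) :
  0 < T -> 0 <= w0_of F -> 0 <= w_e2e N l T F X <= w0_of F ^ N.
Proof.
  intros HT Hw0. unfold w_e2e.
  pose proof (pow_le _ N Hw0).
  edestruct prodR_bound as [P0 P1]; [intro i; apply exp_neg_abs_div_bound, HT |].
  split; [apply Rmult_le_pos; eassumption |].
  rewrite <- (Rmult_1_r (w0_of F ^ N)) at 2. apply Rmult_le_compat_l; eassumption.
Qed.

Lemma Ew_e2e_bound (N : nat) (l : nat -> R) (T F : R) :
  (forall j, (j < N)%nat -> 0 <= l j) -> 0 < T -> 0 <= w0_of F ->
  0 <= Ew_e2e N l T F <= w0_of F ^ N.
Proof.
  intros Hl HT Hw0. apply E_geo_bound; [apply edge_probs_bound, Hl |].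
  intro X; apply w_e2e_bound; assumption.
Qed.

Lemma ln2_pos : 0 < ln 2.
Proof. pose proof ln_lt_2; lra. Qed.

Lemma h2_0 : h2 0 = 0.
Proof. unfold h2, log2. rewrite Rminus_0_r, ln_1. unfold Rdiv; ring. Qed.

Lemma h2_half : h2 (1 / 2) = 1.
Proof.
  pose proof ln2_pos.
  unfold h2, log2. replace (1 - 1 / 2) with (/ 2) by field.
  replace (1 / 2) with (/ 2) by field. rewrite ln_Rinv by lra.
  field; lra.
Qed.

Lemma is_derive_h2 (q : R) :
  0 < q < 1 -> is_derive h2 q ((ln (1 - q) - ln q) / ln 2).
Proof.
  intros Hq. pose proof ln2_pos.
  unfold h2, log2. auto_derive; [repeat split; lra |].
  replace (1 + - q) with (1 - q) by ring. field; lra.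
Qed.

Lemma h2_increasing (x y : R) : 0 < x -> x < y -> y <= 1 / 2 -> h2 x < h2 y.
Proof.
  intros Hx Hxy Hy.
  destruct (MVT_cor2 h2 (fun q => (ln (1 - q) - ln q) / ln 2) x y Hxy)
    as [c [Hmvt Hc]].
  { intros c Hc. apply is_derive_Reals, is_derive_h2. lra. }
  assert (Hslope : 0 < (ln (1 - c) - ln c) / ln 2).
  { apply Rdiv_lt_0_compat; [| exact ln2_pos].
    assert (ln c < ln (1 - c)) by (apply ln_increasing; lra). lra. }
  nra.
Qed.

Lemma h2_half_level_bounds (q : R) : 0 <= q <= 1 / 2 -> h2 q = 1 / 2 -> 0 < q < 1 / 2.
Proof.
  intros Hq Hh.
  assert (q <> 0) by (intros ->; rewrite h2_0 in Hh; lra).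
  assert (q <> 1 / 2) by (intros ->; rewrite h2_half in Hh; lra).
  lra.
Qed.

Lemma h2_le (x y : R) : 0 < x -> x <= y -> y <= 1 / 2 -> h2 x <= h2 y.
Proof.
  intros Hx Hxy Hy. destruct (Rle_lt_or_eq_dec _ _ Hxy) as [Hlt | ->]; [| lra].
  left; apply h2_increasing; assumption.
Qed.

Lemma pow_le_of_ln_div_le (w y : R) (N : nat) :
  0 < w < 1 -> 0 < y -> ln y / ln w <= INR N -> w ^ N <= y.
Proof.
  intros Hw Hy HN.
  assert (Hlnw : ln w < 0) by (rewrite <- ln_1; apply ln_increasing; lra).
  assert (Hln : ln (w ^ N) <= ln y).
  { rewrite ln_pow by lra.
    apply (Rmult_le_compat_r (- ln w)) in HN; [| lra].
    replace (ln y / ln w * - ln w) with (- ln y) in HN by (field; lra).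
    lra. }
  apply Rnot_lt_le; intro Hlt. apply ln_increasing in Hlt; lra.
Qed.

Lemma SKR_eq_0 (N : nat) (l : nat -> R) (T F : R) :
  1 / 2 <= h2 (QBER N l T F) -> SKR N l T F = 0.
Proof. intros Hh. unfold SKR, SKF. rewrite Rmax_left by lra. ring. Qed.

Theorem mainTheorem9 :
  forall (N : nat) (l : nat -> R) (T F Qstar : R),
    (forall j : nat, (j < N)%nat -> 0 <= l j) ->
    0 < T ->
    1 / 4 < F < 1 ->
    0 <= Qstar <= 1 / 2 ->
    h2 Qstar = 1 / 2 ->
    ln (1 - 2 * Qstar) / ln ((4 * F - 1) / 3) <= INR N ->
    SKR N l T F = 0.
Proof.
  intros N l T F Qstar Hl HT HF HQ Hh HN.
  assert (Hw0 : 0 < w0_of F < 1) by (unfold w0_of; lra).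
  destruct (h2_half_level_bounds Qstar HQ Hh) as [HQ0 HQ1].
  assert (HwN : w0_of F ^ N <= 1 - 2 * Qstar)
    by (apply pow_le_of_ln_div_le; [exact Hw0 | lra | exact HN]).
  destruct (Ew_e2e_bound N l T F Hl HT) as [HE0 HE1]; [lra |].
  apply SKR_eq_0. rewrite <- Hh. unfold QBER.
  apply h2_le; lra.
Qed.
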